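(* Let $A$ be an infinite set, fix $z\in A$, $A'=A\setminus\{z\}$, and $p\in[1,\infty)$. Let $\alpha^n=a_1^na_2^n\ldots\in N(A)$ for $n\in\mathbb{N}^*$ and $x_n=p_p(\alpha^n)$. Suppose there are $n_0\in\mathbb{N}^*$, $n_0\ge 2$, and $a,b\in A$ with $a\neq b$ such that $\alpha=a_1a_2\ldots a_{n_0-1}abbb\ldots\in N(A)$ (i.e. the $n_0$-th letter is $a$ and all later letters are $b$), and let $x=p_p(\alpha)$. If $\lim_{n\to\infty}\|x_n-x\|_p=0$, then for every $m\in\mathbb{N}^*$ with $m>n_0+1$ there exists $l_m\in\mathbb{N}^*$ such that for every $l\ge l_m$ one of the following holds: (i) $a_i^l=a_i$ for $i=1,\ldots,n_0-1$, $a_{n_0}^l=a$, and $a_{n_0+1}^l=\cdots=a_m^l=b$; (ii) $a_i^l=a_i$ for $i=1,\ldots,n_0-1$, $a_{n_0}^l=b$, and $a_{n_0+1}^l=\cdots=a_m^l=a$.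
   Context: $l^p(A)$ is the set of families $x=(x_a)_{a\in A'}$ of real numbers with $x_a=0$ for all but countably many $a$ and $\sum_a|x_a|^p<\infty$, with norm $\|x\|_p=(\sum_a|x_a|^p)^{1/p}$. $N(A)$ is the set of all sequences $\alpha=a_1a_2a_3\ldots$ with $a_k\in A$. The map $p_p:N(A)\to l^p(A)$ is $p_p(\alpha)=(\alpha_c)_{c\in A'}$ where, for $\alpha=a_1a_2\ldots$, $\alpha_c=\sum_{k:\,a_k=c}2^{-k}$ (and $\alpha_c=0$ if no $a_k$ equals $c$). *)

From HB Require Import structures.
From mathcomp Require Import all_boot all_order all_algebra.
From mathcomp Require Import all_classical all_reals all_analysis.
Set Implicit Arguments. Unset Strict Implicit. Unset Printing Implicit Defensive.
Import Order.TTheory GRing.Theory Num.Theory.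
Local Open Scope classical_set_scope.
Local Open Scope ring_scope.

(* A word alpha = a_1 a_2 a_3 ... in N(A) is a function al : nat -> A with
   a_k = al k for k >= 1 (the value al 0 is ignored). *)

Definition word_coord (R : realType) (A : Type) (al : nat -> A) (c : A) : R :=
  fine (\esum_(k in [set k : nat | (1 <= k)%N /\ al k = c]) ((2%:R : R) ^- k)%:E)%E.

(* p_p(alpha) = (alpha_c)_{c in A'}, viewed as a function on A; only its
   values on A' = A \ {z} matter (the l^p norm below sums over A' only). *)
Definition pp_map (R : realType) (A : Type) (al : nat -> A) : A -> R :=
  fun c => word_coord R al c.

Definition Aprime (A : Type) (z : A) : set A := [set c | c <> z].

Definition lp_norm (R : realType) (A : choiceType) (z : A) (p : R) (x : A -> R)
  : \bar R :=
  ((\esum_(c in Aprime z) (`|x c| `^ p)%:E) `^ (p^-1))%E.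

(* Read the c-coordinate of a word in binary: its first m digits are the
   indicators [a_k = c], k <= m, and the remaining ones contribute at most
   2^-m.  Since alpha ends with b's, 2^m times its c-coordinate is exactly the
   integer V_c coded by its first m letters plus [c = b].  Once
   ||x_l - x||_p < 2^-(m+1), every coordinate c <> z of x_l is that close to
   the one of alpha, so the integer coded by the first m letters of alpha^l is
   V_c or V_c - 1.  Dividing by 2^(m - n0 + 1) shows that the letters before n0
   agree with those of alpha, and reads off the block at positions n0..m: the
   low digits of V_a and V_b are 10...0, so each of a and b occupies either
   position n0 alone or all of n0+1..m; those of any other letter are 00...0,
   so it occupies none of n0..m or, after a borrow, all of them, which a
   prevents.  As each position carries exactly one letter, only the two shapes
   of the statement remain; the excluded letter z is recovered as the only
   letter left over. *)

From HB Require Import structures.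
From mathcomp Require Import all_boot all_order all_algebra.
From mathcomp Require Import all_classical all_reals all_analysis.
From mathcomp Require Import ring lra zify.
Set Implicit Arguments. Unset Strict Implicit. Unset Printing Implicit Defensive.
Import Order.TTheory GRing.Theory Num.Theory.
Local Open Scope classical_set_scope.
Local Open Scope ring_scope.

Section BinaryCode.
Variable A : eqType.
Local Open Scope nat_scope.
Implicit Types (w u : nat -> A) (c : A).

Fixpoint bincode w c i n : nat :=
  if n is n'.+1 then 2 * bincode w c i n' + (w (i + n) == c) else 0.

Lemma bincode_lt w c i n : bincode w c i n < 2 ^ n.
Proof. by elim: n => //= n IH; rewrite expnS; case: (_ == c); lia. Qed.

Lemma bincode1 w c i : bincode w c i 1 = (w i.+1 == c).
Proof. by rewrite /= addn1. Qed.

Lemma bincodeD w c i n1 n2 :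
  bincode w c i (n1 + n2) = bincode w c i n1 * 2 ^ n2 + bincode w c (i + n1) n2.
Proof.
elim: n2 => [|n2 IH]; first by rewrite addn0 muln1 addn0.
by rewrite addnS /= IH expnS -addnA !addnS mulnDr mulnCA !addnA.
Qed.

Lemma bincode_head w c i n :
  bincode w c i n.+1 = (w i.+1 == c) * 2 ^ n + bincode w c i.+1 n.
Proof. by rewrite -add1n bincodeD bincode1 addn1. Qed.

Lemma bincode_eq0 w c i n :
  bincode w c i n = 0 -> forall k, i < k <= i + n -> w k != c.
Proof.
elim: n => [|n IH] /=; first lia.
case E: (w (i + n.+1) == c) => code0 k /andP[ik kn]; first lia.
move: kn; rewrite leq_eqVlt => /orP[/eqP->|kn']; first by rewrite E.
by apply: IH; lia.
Qed.

Lemma bincode_full w c i n :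
  (bincode w c i n).+1 = 2 ^ n -> forall k, i < k <= i + n -> w k = c.
Proof.
elim: n => [|n IH] /=; first lia.
have := bincode_lt w c i n; rewrite expnS.
case E: (w (i + n.+1) == c) => lt_code full k /andP[ik kn]; last lia.
move: kn; rewrite leq_eqVlt => /orP[/eqP->|kn']; first exact/eqP.
by apply: IH; lia.
Qed.

Lemma bincode_const w b c i n :
  (forall k, i < k <= i + n -> w k = b) -> bincode w c i n = (b == c) * (2 ^ n).-1.
Proof.
elim: n => [|n IH] /= wb; first by rewrite muln0.
rewrite IH => [|k /andP[ik kn]]; last by apply: wb; lia.
rewrite (wb (i + n.+1)) ?expnS; last lia.
have := expn_gt0 2 n; case: (b == c); lia.
Qed.

Lemma bincode_inj w u c i n :
  bincode w c i n = bincode u c i n ->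
  forall k, i < k <= i + n -> (w k == c) = (u k == c).
Proof.
elim: n => [|n IH] /=; first lia.
move=> e k /andP[ik kn].
have [e1 e2] : bincode w c i n = bincode u c i n /\
               (w (i + n.+1) == c) = (u (i + n.+1) == c).
  by move: e; case: (w _ == c); case: (u _ == c); lia.
move: kn; rewrite leq_eqVlt => /orP[/eqP->|kn']; first exact: e2.
by apply: IH; lia.
Qed.

End BinaryCode.

Section LetterCombinatorics.
Local Open Scope nat_scope.

Lemma eq_from_indicators (A : eqType) (z x y : A) :
  (forall c, c != z -> (x == c) = (y == c)) -> x = y.
Proof.
move=> H; apply/eqP; have [xz|xz] := eqVneq x z.
  have [yz|yz] := eqVneq y z; first by rewrite xz yz.
  by rewrite H // eq_sym.
by rewrite eq_sym -H.
Qed.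

Lemma near_divmod q H L K T :
  L < q -> T < q -> H * q + L <= K * q + T <= (H * q + L).+1 ->
  [\/ H = K /\ L = T, 0 < T /\ H = K /\ L.+1 = T | T = 0 /\ L.+1 = q].
Proof.
move=> Lq Tq /andP[lo hi].
have divmod_uniq x y x' y' : y < q -> y' < q -> x * q + y = x' * q + y' ->
    x = x' /\ y = y'.
  move=> yq y'q e; have q0 : 0 < q by lia.
  split; first by have := congr1 (divn^~ q) e; rewrite !divnMDl // !divn_small // !addn0.
  by have := congr1 (modn^~ q) e; rewrite !modnMDl !modn_small.
have [e|e] : K * q + T = H * q + L \/ K * q + T = (H * q + L).+1 by lia.
  by have [-> ->] := divmod_uniq _ _ _ _ Lq Tq (esym e); constructor 1.
clear lo hi; case: T Tq e => [|T] Tq e.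
  case: K e => [|K] e; first lia.
  have [_ ->] := divmod_uniq H L K q.-1 Lq ltac:(lia) ltac:(lia).
  by constructor 3; lia.
have [-> ->] := divmod_uniq H L K T Lq ltac:(lia) ltac:(lia).
by constructor 2.
Qed.

Lemma block_shape (A : eqType) (z a b : A) (w : nat -> A) (n j : nat) :
  a != b -> 0 < j ->
  (forall e, e != z -> (e == a) || (e == b) ->
     (w n = e /\ forall k, n < k <= n + j -> w k != e) \/
     (w n != e /\ forall k, n < k <= n + j -> w k = e)) ->
  (forall c, c != z -> c != a -> c != b ->
     (forall k, n <= k <= n + j -> w k != c) \/
     (forall k, n <= k <= n + j -> w k = c)) ->
  (forall c, c != z -> c != a -> c != b -> forall k, n <= k <= n + j -> w k != c) /\
  ((w n = a /\ forall k, n < k <= n + j -> w k = b) \/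
   (w n = b /\ forall k, n < k <= n + j -> w k = a)).
Proof.
move=> + j_gt0; wlog az : a b / a != z => [hwlog ab Hab Hc|ab Hab Hc].
  have [az|] := eqVneq a z; last by move=> az; apply: hwlog.
  have bz : b != z by rewrite -az eq_sym.
  case: (hwlog b a bz) => [|e ez|c cz cb ca|absent shape].
  - by rewrite eq_sym.
  - by rewrite orbC; apply: Hab.
  - exact: Hc.
  - by split=> [c cz ca cb|]; [apply: absent | rewrite or_comm].
have n_lt : n < n.+1 <= n + j by lia.
have [[wn tail_na]|[wn tail_a]] := Hab a az (predU1l _ erefl).
- have absent c : c != z -> c != a -> c != b -> forall k, n <= k <= n + j -> w k != c.
    move=> cz ca cb; case: (Hc c cz ca cb) => // all_c.
    by move: ca; rewrite -wn all_c ?eqxx //; lia.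
  split=> //; left; split=> // k hk.
  have [wka|wkb|wkz] : [\/ w k = a, w k = b | w k = z].
  - case: (eqVneq (w k) a) => [|wa]; first by constructor 1.
    case: (eqVneq (w k) b) => [|wb]; first by constructor 2.
    case: (eqVneq (w k) z) => [|wz]; first by constructor 3.
    by have := absent _ wz wa wb k ltac:(lia); rewrite eqxx.
  - by have := tail_na k hk; rewrite wka eqxx.
  - by [].
  - have [bz|bz] := eqVneq b z; first by rewrite wkz bz.
    have [[wnb _]|[_ tail_b]] := Hab b bz (predU1r _ _ (eqxx b)); last exact: tail_b.
    by move: ab; rewrite -wn wnb eqxx.
- have absent c : c != z -> c != a -> c != b -> forall k, n <= k <= n + j -> w k != c.
    move=> cz ca cb; case: (Hc c cz ca cb) => // all_c.
    by move: ca; rewrite -(tail_a _ n_lt) all_c ?eqxx //; lia.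
  split=> //; right; split; last exact: tail_a.
  case: (eqVneq (w n) b) => [//|wb].
  case: (eqVneq (w n) z) => [wz|wz]; last first.
    by have := absent _ wz wn wb n ltac:(lia); rewrite eqxx.
  have [bz|bz] := eqVneq b z; first by rewrite wz bz.
  have [[wnb _]|[_ tail_b]] := Hab b bz (predU1r _ _ (eqxx b)); first exact: wnb.
  by move: ab; rewrite -(tail_a _ n_lt) tail_b // eqxx.
Qed.

End LetterCombinatorics.

Section NearCodes.
Local Open Scope nat_scope.
Variables (A : eqType) (z a b : A) (u w : nat -> A) (h j : nat).
Hypotheses (ab : a != b) (j_gt0 : 0 < j).
Hypotheses (u_head : u h.+1 = a) (u_tail : forall k, h.+1 < k -> u k = b).
Hypothesis close_codes : forall c, c != z ->
  bincode w c 0 (h + j.+1) <= bincode u c 0 (h + j.+1) + (c == b)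
                           <= (bincode w c 0 (h + j.+1)).+1.

Lemma bincode_uE c :
  bincode u c 0 (h + j.+1) + (c == b) =
  bincode u c 0 h * 2 ^ j.+1 + ((c == a) || (c == b)) * 2 ^ j.
Proof.
rewrite bincodeD add0n bincode_head u_head (@bincode_const _ u b c h.+1 j);
  last by move=> k hk; apply: u_tail; lia.
rewrite (eq_sym a) (eq_sym b); have := expn_gt0 2 j.
by case: (eqVneq c a) => [->|_]; rewrite ?(negbTE ab); case: (c == b); lia.
Qed.

Lemma close_code_ab e : e != z -> (e == a) || (e == b) ->
  bincode w e 0 h = bincode u e 0 h /\
  ((w h.+1 = e /\ forall k, h.+1 < k <= h.+1 + j -> w k != e) \/
   (w h.+1 != e /\ forall k, h.+1 < k <= h.+1 + j -> w k = e)).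
Proof.
move=> ez eab; have := close_codes ez; rewrite bincode_uE eab mul1n bincodeD add0n.
have lt_j : 2 ^ j < 2 ^ j.+1 by rewrite ltn_exp2l.
have j_pos := expn_gt0 2 j; have lt_tail := bincode_lt w e h.+1 j.
case/(near_divmod (bincode_lt w e h j.+1) lt_j) => [[-> L]|[_ [-> L]]|[]]; last lia.
all: split=> //; move: L; rewrite bincode_head.
- case: eqP => [wh L|_ L]; last lia.
  have tail0 : bincode w e h.+1 j = 0 by lia.
  by left; split=> // k hk; apply: (bincode_eq0 tail0).
- case: eqP => [_ L|wh L]; first lia.
  have tail_full : (bincode w e h.+1 j).+1 = 2 ^ j by lia.
  by right; split; [apply/eqP | move=> k hk; apply: (bincode_full tail_full)].
Qed.

Lemma close_code_other c : c != z -> c != a -> c != b ->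
  (bincode w c 0 h = bincode u c 0 h /\ forall k, h.+1 <= k <= h.+1 + j -> w k != c) \/
  (forall k, h.+1 <= k <= h.+1 + j -> w k = c).
Proof.
move=> cz ca cb; have := close_codes cz.
rewrite bincode_uE (negbTE ca) (negbTE cb) mul0n bincodeD add0n.
case/(near_divmod (bincode_lt w c h j.+1) (expn_gt0 2 j.+1)) => [[-> L]|[]//|[_ L]].
  by left; split=> // k hk; apply: (bincode_eq0 L); lia.
by right=> k hk; apply: (bincode_full L); lia.
Qed.

Lemma close_codes_shape :
  (forall k, 0 < k <= h -> w k = u k) /\
  ((w h.+1 = a /\ forall k, h.+1 < k <= h.+1 + j -> w k = b) \/
   (w h.+1 = b /\ forall k, h.+1 < k <= h.+1 + j -> w k = a)).
Proof.
have block_other c : c != z -> c != a -> c != b ->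
    (forall k, h.+1 <= k <= h.+1 + j -> w k != c) \/
    (forall k, h.+1 <= k <= h.+1 + j -> w k = c).
  by move=> cz ca cb; case: (close_code_other cz ca cb) => [[_ ?]|?]; [left|right].
have [absent shape] :=
  block_shape ab j_gt0 (fun e ez eab => (close_code_ab ez eab).2) block_other.
split=> // k hk; apply: (eq_from_indicators (z := z)) => c cz.
have prefix_eq : bincode w c 0 h = bincode u c 0 h.
  have [eab|] := boolP ((c == a) || (c == b)); first exact: (close_code_ab cz eab).1.
  rewrite negb_or => /andP[ca cb].
  case: (close_code_other cz ca cb) => [[]//|all_c].
  by have := absent c cz ca cb h.+1 ltac:(lia); rewrite all_c ?eqxx //; lia.
exact: (bincode_inj prefix_eq).
Qed.
End NearCodes.

Section WordCoordinates.
Variable R : realType.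

Lemma sum_digits_bincode (A : eqType) (w : nat -> A) c m :
  \sum_(0 <= k < m.+1 | (1 <= k)%N && (w k == c)) (2 ^- k : R) =
  (bincode w c 0 m)%:R / 2 ^+ m.
Proof.
elim: m => [|m IH]; first by rewrite big_mkcond big_nat1 /= mul0r.
rewrite big_mkcond big_nat_recr //= -big_mkcond IH /= add0n exprS invfM.
have two_neq0 : (2 : R) != 0 by rewrite pnatr_eq0.
by case: (w m.+1 == c); rewrite /= ?addr0 natrD natrM; field.
Qed.

Lemma pow2_ge0 k : (0 <= (2 ^- k : R)%:E)%E.
Proof. by rewrite lee_fin invr_ge0 exprn_ge0. Qed.

Lemma geometric_tail m : (\sum_(m.+1 <= k <oo) (2 ^- k : R)%:E = (2 ^- m)%:E)%E.
Proof.
rewrite -nneseries_addn => [|k]; last exact: pow2_ge0.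
apply/cvg_lim => //.
have geo := cvg_geometric_series_half (1 : R) m; rewrite div1r in geo.
have -> : (fun n => \sum_(0 <= i < n) (2 ^- (i + m.+1) : R)%:E)%E =
    EFin \o series (fun k => 1 / (2 ^ (k + m.+1))%:R).
  apply/funext => n /=; rewrite sumEFin; congr EFin.
  by apply: eq_bigr => k _; rewrite div1r natrX.
by apply: (cvg_comp _ _ geo).
Qed.

Section Coordinates.
Variable A : choiceType.
Implicit Types (w : nat -> A) (b c : A).

Lemma digit_tail_bounds w c m :
  (0 <= \sum_(m.+1 <= k <oo | w k == c) (2 ^- k : R)%:E <= (2 ^- m)%:E)%E.
Proof.
rewrite nneseries_ge0 => [/=|k _ _]; last exact: pow2_ge0.
rewrite -geometric_tail eseries_mkcond.
by apply: lee_nneseries => k *; case: ifP => _; rewrite ?pow2_ge0.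
Qed.

Lemma word_esum_split w c m :
  (\esum_(k in [set k : nat | (1 <= k)%N /\ w k = c]) (2 ^- k : R)%:E =
   ((bincode w c 0 m)%:R / 2 ^+ m)%:E +
   \sum_(m.+1 <= k <oo | w k == c) (2 ^- k : R)%:E)%E.
Proof.
have -> : [set k : nat | (1 <= k)%N /\ w k = c] =
          [set k | (1 <= k)%N && (w k == c)].
  by apply/seteqP; split=> k /=; [case=> -> /eqP | case/andP=> -> /eqP].
rewrite -nneseries_esum => [|k _]; last exact: pow2_ge0.
rewrite (nneseries_split_cond 0 m.+1) => [|k _]; last exact: pow2_ge0.
rewrite add0n sumEFin sum_digits_bincode; congr (_ + _)%E.
rewrite [LHS]eseries_cond [RHS]eseries_cond; apply: eq_eseriesl.
by case=> [|k] /=; rewrite ?andbF.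
Qed.

Lemma digit_tail_fin_num w c m :
  (\sum_(m.+1 <= k <oo | w k == c) (2 ^- k : R)%:E)%E \is a fin_num.
Proof.
have /andP[t_ge0 t_le] := digit_tail_bounds w c m.
by rewrite ge0_fin_numE // (le_lt_trans t_le) ?ltry.
Qed.

Lemma word_coordE w c m :
  word_coord R w c = (bincode w c 0 m)%:R / 2 ^+ m +
    fine (\sum_(m.+1 <= k <oo | w k == c) (2 ^- k : R)%:E)%E.
Proof. by rewrite /word_coord (word_esum_split w c m) fineD // digit_tail_fin_num. Qed.

Lemma word_coord_bounds w c m :
  (bincode w c 0 m)%:R / 2 ^+ m <= word_coord R w c <=
  ((bincode w c 0 m)%:R + 1) / 2 ^+ m.
Proof.
have /andP[t_ge0 t_le] := digit_tail_bounds w c m.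
rewrite (word_coordE w c m) mulrDl div1r lerDl fine_ge0 //= lerD2l.
by rewrite -[X in _ <= X]/(fine (2 ^- m)%:E) fine_le ?digit_tail_fin_num.
Qed.

Lemma digit_tail_const w b c m : (forall k, (m < k)%N -> w k = b) ->
  (\sum_(m.+1 <= k <oo | w k == c) (2 ^- k : R)%:E)%E = ((c == b)%:R * 2 ^- m)%:E.
Proof.
move=> w_tail; have [->|cb] := eqVneq c b.
  rewrite mul1r -geometric_tail [LHS]eseries_cond [RHS]eseries_cond.
  apply: eq_eseriesl => k /=.
  by case: (ltnP m k) => mk; rewrite ?andbF // w_tail // eqxx.
by rewrite mul0r; apply: eseries0 => k mk; rewrite w_tail // eq_sym (negbTE cb).
Qed.

Lemma word_coord_eventually_const w b c m : (forall k, (m < k)%N -> w k = b) ->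
  word_coord R w c = (bincode w c 0 m + (c == b))%:R / 2 ^+ m.
Proof.
by move=> w_tail; rewrite (word_coordE w c m) (digit_tail_const c w_tail) natrD mulrDl.
Qed.

Lemma word_coord_near w al b c m : (forall k, (m < k)%N -> al k = b) ->
  `|word_coord R w c - word_coord R al c| < 2 ^- m.+1 ->
  (bincode w c 0 m <= bincode al c 0 m + (c == b) <= (bincode w c 0 m).+1)%N.
Proof.
move=> al_tail close.
set N := bincode w c 0 m; set V := (bincode al c 0 m + (c == b))%N.
set x := word_coord R w c.
have T_gt0 : (0 : R) < 2 ^+ m by rewrite exprn_gt0.
have /andP[lo hi] := word_coord_bounds w c m.
rewrite -/N -/x ler_pdivrMr // ler_pdivlMr // in lo hi.
have {}close : `|x * 2 ^+ m - V%:R| < 2^-1.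
  have half : 2 ^- m.+1 * 2 ^+ m = (2^-1 : R).
    by rewrite exprSr invfM mulrAC mulVf ?gt_eqF // mul1r.
  rewrite -half -(divfK (lt0r_neq0 T_gt0) V%:R) -mulrBl normrM (gtr0_norm T_gt0).
  by rewrite ltr_pM2r // -(word_coord_eventually_const c al_tail).
move: close; rewrite ltr_norml => /andP[close_lo close_hi].
apply/andP; split; rewrite -ltnS -(ltr_nat R).
  by rewrite -addn1 natrD; lra.
by rewrite -addn2 natrD; lra.
Qed.

End Coordinates.

Lemma lp_norm_ge_coord (A : choiceType) (z : A) (p : R) (d : A -> R) c :
  0 < p -> c <> z -> (`|d c|%:E <= lp_norm z p d)%E.
Proof.
move=> p_gt0 cz; rewrite /lp_norm.
set S := (\esum_(i in Aprime z) (`|d i| `^ p)%:E)%E.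
have S_ge0 : (0 <= S)%E by apply: esum_ge0 => i _; rewrite lee_fin powR_ge0.
have c_le_S : ((`|d c| `^ p)%:E <= S)%E.
  by apply: esum_ge; exists [set c]; [split=> // x -> | rewrite fsbig_set1].
have pinv_ge0 : 0 <= p^-1 by rewrite invr_ge0 ltW.
have := gt0_ler_poweR pinv_ge0 _ _ c_le_S.
rewrite !in_itv /= !leey S_ge0 lee_fin powR_ge0 => /(_ isT isT).
by rewrite -powRrM mulfV ?gt_eqF // powRr1.
Qed.

End WordCoordinates.

Theorem proposition3p4 (R : realType) (A : choiceType) (z : A) (p : R)
  (alphas : nat -> nat -> A) (n0 : nat) (a b : A) (alpha : nat -> A) :
  infinite_set [set: A] ->
  1 <= p ->
  (2 <= n0)%N ->
  a <> b ->
  alpha n0 = a ->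
  (forall k, (n0 < k)%N -> alpha k = b) ->
  (lp_norm z p (fun c => pp_map R (alphas n) c - pp_map R alpha c))
     @[n --> \oo] --> 0%E ->
  forall m : nat, (n0.+1 < m)%N ->
  exists lm : nat, (1 <= lm)%N /\
    forall l : nat, (lm <= l)%N ->
      ((forall i, (1 <= i <= n0.-1)%N -> alphas l i = alpha i) /\
       alphas l n0 = a /\
       (forall i, (n0.+1 <= i <= m)%N -> alphas l i = b))
      \/
      ((forall i, (1 <= i <= n0.-1)%N -> alphas l i = alpha i) /\
       alphas l n0 = b /\
       (forall i, (n0.+1 <= i <= m)%N -> alphas l i = a)).
Proof.
move=> _ p_ge1 n0_ge2 /eqP ab alpha_n0 alpha_tail lp_cvg m m_gt.
have eps_gt0 : (0 < (2 ^- m.+1 : R)%:E)%E by rewrite lte_fin invr_gt0 exprn_gt0.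
have [N _ lp_small] := lp_cvg _ (open_ereal_lt' eps_gt0).
exists (maxn N 1); split=> [|l]; first by rewrite leq_maxr.
rewrite geq_max => /andP[Nl _].
have [h n0E] : exists h, n0 = h.+1 by exists n0.-1; lia.
set j := (m - h.+1)%N; have mE : m = (h + j.+1)%N by rewrite /j; lia.
have close_codes c : c != z ->
    (bincode (alphas l) c 0 m <= bincode alpha c 0 m + (c == b)
                                <= (bincode (alphas l) c 0 m).+1)%N.
  move=> /eqP cz.
  apply: (word_coord_near (R := R) (fun k km => alpha_tail k _)); first lia.
  rewrite -lte_fin; apply: le_lt_trans (lp_small l Nl).
  exact: (lp_norm_ge_coord (fun c => pp_map R (alphas l) c - pp_map R alpha c)
            (lt_le_trans ltr01 p_ge1) cz).
subst n0; rewrite mE in close_codes.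
have [|prefix [[head tail]|[head tail]]] :=
  close_codes_shape ab _ alpha_n0 (fun k hk => alpha_tail k hk) close_codes; first lia.
- by left; split=> //; split=> // i hi; apply: tail; lia.
- by right; split=> //; split=> // i hi; apply: tail; lia.
Qed.
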